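(* Let $G$ be a finite $\pi$-separable group, $W\le G$, and $\gamma\in\operatorname{Irr}(W)$ $\pi$-factored. Let $N\trianglelefteq G$ with $N\le W$, and let $\theta\in\operatorname{Irr}(N)$ lie under $\gamma$. Let $Q$ be a Hall $\pi'$-subgroup of $W$ and put $\delta=(\gamma_{\pi'})_Q$. If $\delta$ is a linear character that is stable in $G$, then $\theta$ is $\pi$-factored and its $\pi'$-special factor $\theta_{\pi'}$ is a $G$-invariant linear character.
   Context: $\pi$ is a set of primes. An irreducible character $\chi$ of a $\pi$-separable group $H$ is $\pi$-special if $\chi(1)$ is a $\pi$-number and for every subnormal subgroup $S$ of $H$ every irreducible constituent of $\chi_S$ has determinantal order a $\pi$-number; $\chi$ is $\pi$-factored if $\chi=\alpha\beta$ with $\alpha$ $\pi$-special and $\beta$ $\pi'$-special; the factors are unique and denoted $\chi_\pi$, $\chi_{\pi'}$. A character $\delta$ of a subgroup $Q\le G$ is stable in $G$ if $\delta(x)=\delta(y)$ whenever $x,y\in Q$ are conjugate in $G$. *)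

From HB Require Import structures.
From mathcomp Require Import all_boot all_order all_algebra all_fingroup all_solvable all_field all_character.

Set Implicit Arguments.
Unset Strict Implicit.
Unset Printing Implicit Defensive.

Import GRing.Theory Num.Theory.

Local Open Scope group_scope.
Local Open Scope ring_scope.

Section PiDefs.
Variable gT : finGroupType.

Definition pi_separable (pi : nat_pred) (G : {group gT}) : Prop :=
  exists s : seq {group gT},
    [/\ last 1%G s = G,
        all (fun H : {group gT} => H <| G) s &
        path (fun H K : {group gT} =>
                (H \subset K) && (pi.-nat #|K : H| || pi^'.-nat #|K : H|))
             1%G s].

Definition pi_special (pi : nat_pred) (H : {group gT}) (chi : 'CF(H)) : Prop :=
  [/\ chi \in irr H,
      exists2 n : nat, (chi 1%g = n%:R)%R & pi.-nat n
    & forall S : {group gT}, S <|<| H ->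
        forall i : Iirr S, i \in irr_constt ('Res[S] chi) -> pi.-nat 'o('chi_i)%CF].

Definition pi_factored (pi : nat_pred) (H : {group gT}) (chi : 'CF(H)) : Prop :=
  exists alpha beta : 'CF(H),
    [/\ pi_special pi alpha, pi_special pi^' beta & chi = (alpha * beta)%R].

Definition stable_in (G Q : {group gT}) (delta : 'CF(Q)) : Prop :=
  forall x y g, x \in Q -> y \in Q -> g \in G -> y = (x ^ g)%g -> delta x = delta y.

End PiDefs.

From HB Require Import structures.
From mathcomp Require Import all_boot all_order all_algebra all_fingroup all_solvable all_field all_character.

(* Since its restriction delta to the Hall pi'-subgroup Q is linear, beta is
   linear; being pi'-special it then has pi'-order and is trivial on
   pi-elements.  Every element of W of prime-power order p in pi' is
   W-conjugate into Q, so splitting elements into their p-parts spreads the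
   G-stability of delta to beta on all of W, and lambda := beta_N is a
   G-invariant linear character.  Then theta = (theta lambda^* ) lambda, where
   theta lambda^* is a constituent of alpha_N, and constituents of the
   restriction of a pi-special character to a normal subgroup are
   pi-special. *)

Set Implicit Arguments.
Unset Strict Implicit.
Unset Printing Implicit Defensive.
Import GRing.Theory Num.Theory.
Local Open Scope group_scope.
Local Open Scope ring_scope.

Section PiSpecialCharacters.

Variable gT : finGroupType.
Implicit Types (pi : nat_pred) (G H N W Q : {group gT}).

Lemma lin_char_coprime_order1 G (xi : 'CF(G)) x :
  xi \is a linear_char -> x \in G -> coprime #[x] #[xi]%CF -> xi x = 1.
Proof.
move=> lin_xi Gx co_x_xi; have Xx : x \in <[x]> := cycle_id x.
rewrite orderE in co_x_xi.
rewrite -(expgK co_x_xi Xx) !lin_charX ?groupX //.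
by rewrite -exp_cfunE // exp_cforder cfun1E Gx expr1n.
Qed.

Lemma pi_special_lin_cforder pi G (xi : 'CF(G)) :
  pi_special pi xi -> xi \is a linear_char -> pi.-nat #[xi]%CF.
Proof.
case=> /irrP[k def_xi] _ det_pi lin_xi.
have := det_pi G (subnormal_refl G) k.
rewrite cfRes_id -def_xi cfDet_order_lin //; apply.
by rewrite def_xi constt_irr inE.
Qed.

Lemma pi_special_lin_char_pi'_elt pi G (xi : 'CF(G)) x :
  pi_special pi xi -> xi \is a linear_char -> x \in G -> pi^'.-elt x ->
  xi x = 1.
Proof.
move=> sp_xi lin_xi Gx pi'x; apply: lin_char_coprime_order1 => //.
by rewrite coprime_sym (pnat_coprime (pi_special_lin_cforder sp_xi lin_xi)).
Qed.

Lemma Hall_pelt_Jsub pi p H Q u :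
  pi.-Hall(H) Q -> p \in pi -> u \in H -> p.-elt u ->
  exists2 w, w \in H & (u ^ w)%g \in Q.
Proof.
move=> hallQ pi_p Hu p_u; have [P sylP] := Sylow_exists p Q.
have sylPH := subHall_Sylow hallQ pi_p sylP.
have [|w Hw sUP] := Sylow_Jsub sylPH _ p_u; first by rewrite cycle_subG.
exists w => //; apply: subsetP (pHall_sub sylP) _ _; apply: subsetP sUP _ _.
by rewrite memJ_conjg cycle_id.
Qed.

Lemma lin_char_stable_pelt G W (xi : 'CF(W)) :
    xi \is a linear_char ->
    (forall (p : nat) y g, y \in W -> p.-elt y -> g \in G -> (y ^ g)%g \in W ->
       xi (y ^ g)%g = xi y) ->
  stable_in G xi.
Proof.
move=> lin_xi stab_pelt x y g Wx Wy Gg def_y; rewrite def_y in Wy *.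
(* x is the product of its p-parts, on which xi is multiplicative. *)
have Wconstt z p : z \in W -> z.`_p \in W by move=> Wz; rewrite groupX.
rewrite -{1}(prod_constt x) -{1}(prod_constt (x ^ g)) orderJ.
rewrite !(lin_char_prod lin_xi) => [|p _|p _]; rewrite ?Wconstt //.
apply: eq_bigr => p _; rewrite consttJ; symmetry.
by apply: (stab_pelt p); rewrite ?p_elt_constt ?Wconstt // -consttJ Wconstt.
Qed.

Lemma lin_char_stable_Hall pi G W Q (xi : 'CF(W)) :
    W \subset G -> pi.-Hall(W) Q -> xi \is a linear_char ->
    {in W, forall x, pi^'.-elt x -> xi x = 1} ->
  stable_in G ('Res[Q] xi) -> stable_in G xi.
Proof.
move=> sWG hallQ lin_xi xi_pi' stabQ; have sQW := pHall_sub hallQ.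
apply: lin_char_stable_pelt => // p y g Wy p_y Gg Wyg.
have [pi_p | pi'_p] := boolP (p \in pi); last first.
  have pi'_elt z : p.-elt z -> pi^'.-elt z by move/pi_pnat; apply.
  by rewrite !xi_pi' ?pi'_elt ?p_eltJ.
have [w1 Ww1 Qyw1] := Hall_pelt_Jsub hallQ pi_p Wy p_y.
have [|w2 Ww2 Qygw2] := Hall_pelt_Jsub hallQ pi_p Wyg; first by rewrite p_eltJ.
rewrite -(cfunJ _ y Ww1) -(cfunJ _ _ Ww2) -!(cfResE _ sQW) //; symmetry.
apply: (stabQ _ _ (w1^-1 * g * w2)%g) => //.
  by rewrite !groupM ?groupV // (subsetP sWG).
by rewrite !conjgM conjgK.
Qed.

Lemma stable_in_inertia G W N (xi : 'CF(W)) :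
  N <| G -> N \subset W -> stable_in G xi -> G \subset 'I['Res[N] xi].
Proof.
move=> nsNG sNW stab_xi; apply/subsetP=> g Gg.
have nNg := subsetP (normal_norm nsNG) g Gg.
rewrite inE nNg; apply/eqP/cfunP=> x; rewrite cfConjgE //.
have [Nx | N'x] := boolP (x \in N); last by rewrite !cfun0 ?memJ_norm ?groupV.
have Nxg' : (x ^ g^-1)%g \in N by rewrite memJ_norm ?groupV.
rewrite !cfResE //; apply: (stab_xi _ _ g _ _ Gg); rewrite ?conjgKV //.
  exact: subsetP sNW _ Nxg'.
exact: subsetP sNW _ Nx.
Qed.

Lemma constt_mul_lin_char G (phi lam : 'CF(G)) i j :
    phi \is a character -> lam \is a linear_char ->
    i \in irr_constt phi -> 'chi_i * lam = 'chi_j ->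
  j \in irr_constt (phi * lam).
Proof.
move=> Nphi lin_lam /constt_charP[// | psi Npsi ->] def_j.
have Nlam := lin_charW lin_lam.
apply/constt_charP; first by rewrite rpredM ?rpredD ?irr_char.
by exists (psi * lam); rewrite ?rpredM // mulrDl def_j.
Qed.

Lemma pi_special_Res_constt pi W N (alpha : 'CF(W)) j :
    N <| W -> pi_special pi alpha -> j \in irr_constt ('Res[N] alpha) ->
  pi_special pi 'chi_j.
Proof.
move=> nsNW [/irrP[k ->] [a alpha1 pi_a] det_pi] Cj; split; first exact: mem_irr.
  have [t chij1] := natrP (Cnat_irr1 j); exists t => //.
  have [n chik1] := dvdn_constt_Res1_irr1 nsNW Cj.
  apply: pnat_dvd pi_a; apply/dvdnP; exists n; apply/eqP.
  by rewrite -(eqr_nat algC) natrM -alpha1 chik1 chij1.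
move=> S snSN l Cl; have sSN := subnormal_sub snSN.
apply: det_pi; first exact: subnormal_trans snSN (normal_subnormal nsNW).
rewrite -(cfResRes _ sSN (normal_sub nsNW)).
by apply: constt_Res_trans Cl; rewrite ?cfRes_char ?irr_char.
Qed.

End PiSpecialCharacters.

Theorem lemma3p1 (gT : finGroupType) (pi : nat_pred) (G W N Q : {group gT})
    (gamma alpha beta : 'CF(W)) (i : Iirr N) :
  pi_separable pi G -> (W \subset G)%g ->
  gamma \in irr W ->
  pi_special pi alpha -> pi_special pi^' beta -> gamma = (alpha * beta)%R ->
  (N <| G)%g -> (N \subset W)%g ->
  i \in irr_constt ('Res[N] gamma)%R ->
  (pi^'.-Hall(W) Q)%g ->
  ('Res[Q] beta)%R \is a linear_char -> stable_in G ('Res[Q] beta)%R ->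
  exists alpha' beta' : 'CF(N),
    [/\ pi_special pi alpha', pi_special pi^' beta', ('chi_i = alpha' * beta')%R,
        beta' \is a linear_char & (G \subset 'I[beta'])%g].
Proof.
move=> _ sWG irr_gamma sp_alpha sp_beta def_gamma nsNG sNW Ci hallQ linQ stabQ.
have nsNW : N <| W := normalS sNW sWG nsNG.
have [irr_beta _ _] := sp_beta.
have lin_beta : beta \is a linear_char.
  by rewrite qualifE/= irrWchar //= -(cfRes1 Q) lin_char1.
set lam := 'Res[N] beta; have lin_lam : lam \is a linear_char by apply: cfRes_lin_char.
have beta_pi_elt : {in W, forall x, pi^'^'.-elt x -> beta x = 1}.
  by move=> x; apply: pi_special_lin_char_pi'_elt.
have stab_beta := lin_char_stable_Hall sWG hallQ lin_beta beta_pi_elt stabQ.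
have /irrP[j def_j] : 'chi_i * lam^*%CF \in irr N.
  by rewrite mulrC mul_lin_irr ?cfConjC_lin_char ?mem_irr.
have Cj : j \in irr_constt ('Res[N] alpha).
  have ->: 'Res[N] alpha = 'Res[N] gamma * lam^*%CF.
    by rewrite def_gamma rmorphM /= -/lam -mulrA (mul_conjC_lin_char lin_lam) mulr1.
  by apply: constt_mul_lin_char def_j; rewrite ?cfRes_char ?irrWchar ?cfConjC_lin_char.
have /irrP[l def_l] := lin_char_irr lin_lam.
exists 'chi_j, lam; split=> //.
- exact: pi_special_Res_constt nsNW sp_alpha Cj.
- rewrite def_l; apply: pi_special_Res_constt nsNW sp_beta _.
  by rewrite -/lam def_l constt_irr inE.
- by rewrite -def_j -mulrA (mulrC _ lam) (mul_conjC_lin_char lin_lam) mulr1.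
exact: stable_in_inertia nsNG sNW stab_beta.
Qed.
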